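(* Fix $B>1$ and $\alpha>0$. For a block $A$ (a map between real vector spaces) with approximation $A^\alpha$, let $$E_A^\alpha(e)=\sup_{\|\mathbf{x}+\mathbf{e}\|_\infty\le B,\ \|\mathbf{e}\|_\infty\le e}\|A^\alpha(\mathbf{x}+\mathbf{e})-A(\mathbf{x})\|_\infty .$$ Then for every $e\ge0$: (a) If $A$ is a linear block $A(\mathbf{x})=\mathbf{A}\mathbf{x}+\mathbf{b}$ with $A^\alpha=A$, then $E_A^\alpha(e)\le\|\mathbf{A}\|_\infty e$, where $\|\mathbf{A}\|_\infty$ is the matrix infinity norm (maximum absolute row sum). (b) If $A$ is a ReLU block (coordinatewise $\mathrm{ReLU}(x)=\max(x,0)$) and $A^\alpha$ applies $\tilde r_{\alpha,B}$ coordinatewise, then $E_A^\alpha(e)\le B2^{-\alpha}+e$. (c) If $A$ is a max-pooling block with kernel size $k_0\le 10$ (each output coordinate is the maximum of a window of $k_0^2$ input coordinates), $A^\alpha$ replaces each such maximum by $\tilde M_{\alpha,k_0^2,B}$ applied to the same window, and $\alpha\ge 4$, then $E_A^\alpha(e)\le 10B\lceil\log_2 k_0^2\rceil 2^{-\alpha}+e$. (d) If $A$ is a softmax block $A(\mathbf{x})=\big(\exp(x_i)/\sum_j\exp(x_j)\big)_{1\le i\le N}$ with $A^\alpha=A$, then $E_A^\alpha(e)\le e/2$.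
   Context: Let $p_\alpha$ be a polynomial such that $m_\alpha(a,b)=\frac{(a+b)+(a-b)p_\alpha(a-b)}{2}$ satisfies $|m_\alpha(a,b)-\max(a,b)|\le2^{-\alpha}$ for all $a,b\in[0,1]$. Define $r_\alpha(x)=\frac{x+xp_\alpha(x)}{2}$ and $\tilde r_{\alpha,B}(x)=B\,r_\alpha(x/B)$. Define $M_{\alpha,1}(x_1)=x_1$, $M_{\alpha,2k}(x_1,\dots,x_{2k})=m_\alpha(M_{\alpha,k}(x_1,\dots,x_k),M_{\alpha,k}(x_{k+1},\dots,x_{2k}))$, $M_{\alpha,2k+1}(x_1,\dots,x_{2k+1})=m_\alpha(M_{\alpha,k}(x_1,\dots,x_k),M_{\alpha,k+1}(x_{k+1},\dots,x_{2k+1}))$, and $$\tilde M_{\alpha,n,B}(x_1,\dots,x_n)=B'\Big(M_{\alpha,n}\big(\tfrac{x_1}{B'}+0.5,\dots,\tfrac{x_n}{B'}+0.5\big)-0.5\Big),\quad B'=\frac{B}{0.5-(\lceil\log_2 n\rceil-1)2^{-\alpha}}.$$ *)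

From HB Require Import structures.
From mathcomp Require Import all_boot all_order all_algebra.
From mathcomp Require Import all_classical all_reals all_analysis.
Set Implicit Arguments. Unset Strict Implicit. Unset Printing Implicit Defensive.
Import Order.TTheory GRing.Theory Num.Theory.
Local Open Scope ring_scope.
Local Open Scope classical_set_scope.

Section Defs.
Variable R : realType.

Definition m_al (p : {poly R}) (a b : R) : R :=
  ((a + b) + (a - b) * p.[a - b]) / 2.

Definition r_al (p : {poly R}) (x : R) : R := (x + x * p.[x]) / 2.

Definition rt_al (p : {poly R}) (B x : R) : R := B * r_al p (x / B).

Fixpoint M_fuel (p : {poly R}) (fuel : nat) (s : seq R) : R :=
  match fuel with
  | 0%N => head 0 s
  | f.+1 =>
      if (size s <= 1)%N then head 0 s
      else let k := (size s)./2 in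
           m_al p (M_fuel p f (take k s)) (M_fuel p f (drop k s))
  end.

Definition M_al (p : {poly R}) (s : seq R) : R := M_fuel p (size s) s.

(* B' = B / (0.5 - (ceil(log2 n) - 1) 2^{-alpha});  ceil(log2 n) = up_log 2 n *)
Definition Bprime (alpha B : R) (n : nat) : R :=
  B / (2^-1 - ((up_log 2 n)%:R - 1) * (2 `^ (- alpha))).

Definition Mt_al (p : {poly R}) (alpha B : R) (s : seq R) : R :=
  let B' := Bprime alpha B (size s) in
  B' * (M_al p [seq x / B' + 2^-1 | x <- s] - 2^-1).

Definition vnorm n (x : 'cV[R]_n) : R := \big[Num.max/0]_(i < n) `|x i ord0|.

Definition mnorm m n (A : 'M[R]_(m, n)) : R :=
  \big[Num.max/0]_(i < m) \sum_(j < n) `|A i j|.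

Definition Err n m (A Aal : 'cV[R]_n -> 'cV[R]_m) (B e : R) : \bar R :=
  ereal_sup [set r : \bar R | exists (x d : 'cV[R]_n),
     [/\ vnorm (x + d) <= B, vnorm d <= e & r = (vnorm (Aal (x + d) - A x))%:E] ].

Definition listmax (s : seq R) : R := \big[Num.max/head 0 s]_(y <- s) y.

Definition linear_block m n (A : 'M[R]_(m, n)) (b : 'cV[R]_m) (x : 'cV[R]_n)
  : 'cV[R]_m := A *m x + b.

Definition relu (x : R) : R := Num.max x 0.
Definition relu_block n (x : 'cV[R]_n) : 'cV[R]_n := map_mx relu x.
Definition relu_block_al (p : {poly R}) (B : R) n (x : 'cV[R]_n) : 'cV[R]_n :=
  map_mx (rt_al p B) x.

(* max pooling: output coordinate i is the max of the window
   x_{w i 0}, ..., x_{w i (K-1)}, with K = k0^2 *)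
Definition window n K (w : 'I_K -> 'I_n) (x : 'cV[R]_n) : seq R :=
  [seq x (w j) ord0 | j <- enum 'I_K].
Definition maxpool_block n m K (w : 'I_m -> 'I_K -> 'I_n) (x : 'cV[R]_n)
  : 'cV[R]_m := \col_(i < m) listmax (window (w i) x).
Definition maxpool_block_al (p : {poly R}) (alpha B : R) n m K
  (w : 'I_m -> 'I_K -> 'I_n) (x : 'cV[R]_n) : 'cV[R]_m :=
  \col_(i < m) Mt_al p alpha B (window (w i) x).

Definition softmax_block N (x : 'cV[R]_N) : 'cV[R]_N :=
  \col_(i < N) (expR (x i ord0) / \sum_(j < N) expR (x j ord0)).

End Defs.

From HB Require Import structures.
From mathcomp Require Import all_boot all_order all_algebra.
From mathcomp Require Import all_classical all_reals all_analysis.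
From mathcomp Require Import ring lra zify.
Set Implicit Arguments. Unset Strict Implicit. Unset Printing Implicit Defensive.
Import Order.TTheory GRing.Theory Num.Theory.
Local Open Scope ring_scope.

(* The linear block errs by (A d)_i.  For the ReLU and max-pooling blocks the
   error splits into the approximation error at x + d plus the change of the
   1-Lipschitz maps relu and max under the perturbation d.  On [-1, 1],
   r_alpha t is m_alpha(t, 0) for t >= 0 and m_alpha(0, -t) + t for t < 0, so it
   is 2^-alpha-close to relu; rescaling by B gives B 2^-alpha.  For M~, the
   affine rescaling y |-> y / B' + 1/2 maps [-B, B] into the band
   [(L - 1) 2^-alpha, 1 - (L - 1) 2^-alpha], L = ceil(log2 n): along the depth-L
   halving tree, the values computed at level l stay within l 2^-alpha of the true
   maxima, hence in [0, 1], so the errors add up to L 2^-alpha, and B' <= 10 B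
   once alpha >= 4 and n <= 100.  For softmax, perturbing every exponent by at
   most e multiplies both e^(x_i) and the sum of the other e^(x_j) by factors in
   [e^-e, e^e], which moves the share a / (a + b) by at most
   tanh(e / 2) <= e / 2. *)

Section BlockErrors.
Variable R : realType.

Lemma vnorm_le n (v : 'cV[R]_n) (c : R) :
  0 <= c -> (forall i, `|v i ord0| <= c) -> vnorm v <= c.
Proof. by move=> c0 vc; apply: bigmax_le. Qed.

Lemma ler_vnorm n (v : 'cV[R]_n) i : `|v i ord0| <= vnorm v.
Proof. exact: le_bigmax. Qed.

Lemma vnorm_le_coord n (v : 'cV[R]_n) (c : R) i : vnorm v <= c -> `|v i ord0| <= c.
Proof. exact: le_trans (ler_vnorm v i). Qed.

Lemma Err_le_pointwise n m (A Aal : 'cV[R]_n -> 'cV[R]_m) (B e c : R) : 0 <= c ->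
  (forall x d : 'cV[R]_n, vnorm (x + d) <= B -> vnorm d <= e ->
     forall i, `|Aal (x + d) i ord0 - A x i ord0| <= c) ->
  (Err A Aal B e <= c%:E)%E.
Proof.
move=> c0 Ac; apply: ge_ereal_sup => _ [x [d [xdB de ->]]].
by rewrite lee_fin; apply: vnorm_le => // i; rewrite !mxE; apply: Ac.
Qed.

Lemma mnorm_ge0 m n (A : 'M[R]_(m, n)) : 0 <= mnorm A.
Proof.
apply: (big_ind (fun x => 0 <= x)) => // [x y|i _]; last exact: sumr_ge0.
by rewrite le_max => ->.
Qed.

Lemma linear_block_Err m n (A : 'M[R]_(m, n)) (b : 'cV[R]_m) (B e : R) : 0 <= e ->
  (Err (linear_block A b) (linear_block A b) B e <= (mnorm A * e)%:E)%E.
Proof.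
move=> e0; apply: Err_le_pointwise => [|x d _ de i].
  exact: mulr_ge0 (mnorm_ge0 A) e0.
have -> : linear_block A b (x + d) i ord0 - linear_block A b x i ord0
          = \sum_j A i j * d j ord0.
  by rewrite /linear_block mulmxDr !mxE; ring.
apply: le_trans (ler_norm_sum _ _ _) _.
apply: (@le_trans _ _ (\sum_j `|A i j| * e)).
  apply: ler_sum => j _; rewrite normrM ler_wpM2l //.
  exact: vnorm_le_coord de.
by rewrite -mulr_suml ler_wpM2r //; apply: le_bigmax.
Qed.

Definition approx_max01 (p : {poly R}) (eps : R) : Prop :=
  forall a b : R, 0 <= a <= 1 -> 0 <= b <= 1 -> `|m_al p a b - Num.max a b| <= eps.

Lemma approx_max01_ge0 (p : {poly R}) (eps : R) : approx_max01 p eps -> 0 <= eps.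
Proof. by move=> m_err; apply: le_trans (m_err 0 0 _ _); rewrite ?lexx ?ler01. Qed.

Lemma r_al_relu_err (p : {poly R}) (eps : R) :
  approx_max01 p eps ->
  forall t : R, -1 <= t <= 1 -> `|r_al p t - relu t| <= eps.
Proof.
move=> m_err t /andP[t_ge t_le]; rewrite /relu; case: (leP 0 t) => t0.
  have := m_err t 0; rewrite /m_al /r_al !subr0 addr0 (max_idPl t0); apply; lra.
have := m_err 0 (- t); rewrite /m_al /r_al (max_idPr (_ : 0 <= - t)); last lra.
have -> : (0 + - t + (0 - - t) * p.[0 - - t]) / 2 - - t = (t + t * p.[t]) / 2.
  by rewrite !sub0r !opprK; field.
rewrite subr0; apply; lra.
Qed.

Lemma relu_dist_le (x y : R) : `|relu y - relu x| <= `|y - x|.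
Proof.
rewrite /relu ler_norml; have := ler_norm (y - x); have := ler_norm (x - y).
by rewrite distrC; case: (leP x 0); case: (leP y 0) => *; apply/andP; split; lra.
Qed.

Lemma relu_pscale (c y : R) : 0 < c -> c * relu (y / c) = relu y.
Proof.
by move=> c0; rewrite /relu maxr_pMr ?ltW // mulr0 mulrCA divff ?mulr1 ?gt_eqF.
Qed.

Lemma relu_block_Err (p : {poly R}) n (B e eps : R) :
  approx_max01 p eps -> 0 < B -> 0 <= e ->
  (Err (@relu_block R n) (relu_block_al p B (n:=n)) B e <= (B * eps + e)%:E)%E.
Proof.
move=> m_err B0 e0; have eps0 := approx_max01_ge0 m_err.
apply: Err_le_pointwise => [|x d xdB de i].
  by rewrite addr_ge0 // mulr_ge0 // ltW.
rewrite !mxE; set y := x i ord0 + d i ord0.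
have yB : `|y| <= B by have := vnorm_le_coord i xdB; rewrite mxE.
have -> : rt_al p B y - relu (x i ord0)
          = B * (r_al p (y / B) - relu (y / B)) + (relu y - relu (x i ord0)).
  by rewrite /rt_al mulrBr relu_pscale //; ring.
apply: le_trans (ler_normD _ _) _; apply: lerD.
  rewrite normrM gtr0_norm // ler_pM2l //; apply: r_al_relu_err => //.
  by rewrite -ler_norml normrM normfV (gtr0_norm B0) ler_pdivrMr // mul1r.
apply: le_trans (relu_dist_le _ _) _.
by rewrite /y addrC addKr; apply: vnorm_le_coord.
Qed.

Lemma le_listmax (s : seq R) y : y \in s -> y <= listmax s.
Proof. by move=> ys; apply: (le_bigmax_seq _ y xpredT id ys). Qed.

Lemma listmax_mem (s : seq R) : s != [::] -> listmax s \in s.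
Proof.
case: s => // a s _; rewrite /listmax big_seq.
apply: (big_ind (fun z => z \in a :: s)) => [|u v|//]; first exact: mem_head.
by case: leP.
Qed.

Lemma listmax_eq_ub (s : seq R) z :
  z \in s -> (forall y, y \in s -> y <= z) -> listmax s = z.
Proof.
move=> zs ub; apply: le_anti; rewrite le_listmax // andbT.
by apply/ub/listmax_mem; apply: contraTneq zs => ->.
Qed.

Lemma listmax_seq1 (y : R) : listmax [:: y] = y.
Proof. by apply: listmax_eq_ub => [|z]; rewrite mem_seq1 // => /eqP ->. Qed.

Lemma listmax_cat (s1 s2 : seq R) : s1 != [::] -> s2 != [::] ->
  listmax (s1 ++ s2) = Num.max (listmax s1) (listmax s2).
Proof.
move=> ne1 ne2; apply: listmax_eq_ub.
  by rewrite mem_cat; case: leP => _; rewrite listmax_mem ?orbT.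
move=> y; rewrite mem_cat le_max => /orP[] /le_listmax ->; by rewrite ?orbT.
Qed.

Lemma listmax_map_homo (f : R -> R) (s : seq R) :
  s != [::] -> {homo f : x y / x <= y} -> listmax (map f s) = f (listmax s).
Proof.
move=> ne f_homo; apply: listmax_eq_ub; first exact/map_f/listmax_mem.
by move=> _ /mapP[y ys ->]; apply/f_homo/le_listmax.
Qed.

Lemma dist_listmax_le (I : eqType) (r : seq I) (f g : I -> R) (c : R) :
  r != [::] -> (forall i, `|f i - g i| <= c) ->
  `|listmax (map f r) - listmax (map g r)| <= c.
Proof.
move=> ne fg; have ne_map (h : I -> R) : map h r != [::] by case: (r) ne.
have /mapP[i ir fi] := listmax_mem (ne_map f).
have /mapP[j jr gj] := listmax_mem (ne_map g).
have gi : g i <= listmax (map g r) by apply/le_listmax/map_f.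
have fj : f j <= listmax (map f r) by apply/le_listmax/map_f.
move: (fg i) (fg j); rewrite fi gj in gi fj *; rewrite !ler_norml.
by move=> /andP[? ?] /andP[? ?]; apply/andP; split; lra.
Qed.

Lemma dist_max_le (a b c d : R) :
  `|Num.max a b - Num.max c d| <= Num.max `|a - c| `|b - d|.
Proof.
have := ler_norm (a - c); have := ler_norm (c - a).
have := ler_norm (b - d); have := ler_norm (d - b).
rewrite [`|c - a|]distrC [`|d - b|]distrC.
rewrite ler_norml; case: (leP a b); case: (leP c d);
  case: (leP `|a - c| `|b - d|) => *; apply/andP; split; lra.
Qed.

Lemma M_fuel_short (p : {poly R}) fuel (s : seq R) :
  (0 < size s <= 1)%N -> (size s <= fuel)%N -> M_fuel p fuel s = listmax s.
Proof.
by case: s => // y [|//] _; case: fuel => // f _ /=; rewrite listmax_seq1.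
Qed.

Lemma half_split_bounds (n L : nat) : (1 < n <= 2 ^ L.+1)%N ->
  [/\ 0 < n./2, n./2 < n, n./2 <= 2 ^ L & n - n./2 <= 2 ^ L]%N.
Proof.
have : (odd n <= 1)%N by case: odd.
by have := odd_double_half n; rewrite -muln2 expnS => ? ? ?; split; lia.
Qed.

Section MaxTree.
Variables (p : {poly R}) (eps : R).
Hypothesis m_err : approx_max01 p eps.

Lemma m_al_err_step (a b a0 b0 c : R) :
  c <= a0 <= 1 - c -> c <= b0 <= 1 - c -> `|a - a0| <= c -> `|b - b0| <= c ->
  `|m_al p a b - Num.max a0 b0| <= eps + c.
Proof.
move=> a0_in b0_in aa0 bb0.
have unit_ab : 0 <= a <= 1 /\ 0 <= b <= 1.
  move: a0_in b0_in aa0 bb0; rewrite !ler_distl.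
  move=> /andP[? ?] /andP[? ?] /andP[? ?] /andP[? ?].
  by split; apply/andP; split; lra.
rewrite -[m_al p a b](subrK (Num.max a b)) -addrA.
apply: le_trans (ler_normD _ _) _; apply: lerD.
  by case: unit_ab; apply: m_err.
by apply: le_trans (dist_max_le _ _ _ _) _; rewrite ge_max aa0 bb0.
Qed.

Lemma M_fuel_err L fuel (s : seq R) :
  s != [::] -> (size s <= 2 ^ L)%N -> (size s <= fuel)%N ->
  (forall y, y \in s -> (L%:R - 1) * eps <= y <= 1 - (L%:R - 1) * eps) ->
  `|M_fuel p fuel s - listmax s| <= L%:R * eps.
Proof.
have eps0 := approx_max01_ge0 m_err.
elim: L fuel s => [|L IH] fuel s ne s_le s_fuel s_in.
  by rewrite M_fuel_short ?subrr ?normr0 ?mul0r // lt0n size_eq0 ne.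
have [s_short|s_long] := leqP (size s) 1.
  by rewrite M_fuel_short ?lt0n ?size_eq0 ?ne // subrr normr0 mulr_ge0.
case: fuel s_fuel => [|f] s_fuel; first lia.
rewrite /= leqNgt s_long /=; set k := (size s)./2.
have [k_gt0 k_lt k_le sk_le] := @half_split_bounds (size s) L ltac:(lia).
have sz_take : size (take k s) = k by rewrite size_takel // ltnW.
have ne1 : take k s != [::] by rewrite -size_eq0 sz_take -lt0n.
have ne2 : drop k s != [::] by rewrite -size_eq0 size_drop -lt0n subn_gt0.
have s_in' y : y \in s -> L%:R * eps <= y <= 1 - L%:R * eps.
  by move/s_in; rewrite -[L.+1]addn1 natrD addrK.
have band y : y \in s -> (L%:R - 1) * eps <= y <= 1 - (L%:R - 1) * eps.
  by move/s_in' => /andP[? ?]; apply/andP; split; lra.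
have IH1 := IH f _ ne1 ltac:(by rewrite sz_take) ltac:(rewrite sz_take; lia)
  (fun y ys => band y (mem_take ys)).
have IH2 := IH f _ ne2 ltac:(by rewrite size_drop) ltac:(rewrite size_drop; lia)
  (fun y ys => band y (mem_drop ys)).
have -> : listmax s = Num.max (listmax (take k s)) (listmax (drop k s)).
  by rewrite -listmax_cat // cat_take_drop.
rewrite -[L.+1]addn1 natrD mulrDl mul1r [_ + eps]addrC.
by apply: (m_al_err_step _ _ IH1 IH2); apply: s_in';
  [apply: mem_take (listmax_mem ne1) | apply: mem_drop (listmax_mem ne2)].
Qed.

End MaxTree.

Lemma powR2N_le_inv16 (alpha : R) : 4 <= alpha -> 2 `^ (- alpha) <= 1 / 16.
Proof.
move=> a4; apply: le_trans (_ : 2 `^ (- 4) <= _); first by rewrite ler_powR; lra.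
by rewrite powRN powR_mulrn ?mul1r //; lra.
Qed.

Lemma Mt_al_err (p : {poly R}) (alpha B : R) (s : seq R) :
  approx_max01 p (2 `^ (- alpha)) -> 0 < B -> 4 <= alpha ->
  s != [::] -> (size s <= 100)%N -> (forall y, y \in s -> `|y| <= B) ->
  `|Mt_al p alpha B s - listmax s|
    <= 10 * B * (up_log 2 (size s))%:R * 2 `^ (- alpha).
Proof.
move=> m_err B0 a4 ne s100 sB; rewrite /Mt_al /Bprime /M_al size_map.
set eps := 2 `^ (- alpha); set L := up_log 2 (size s).
set D := 2^-1 - (L%:R - 1) * eps; set B' := B / D.
have eps0 : 0 <= eps := approx_max01_ge0 m_err.
have L7 : (L%:R : R) <= 7.
  by rewrite (_ : 7 = 7%:R :> R) // ler_nat up_log_min // (leq_trans s100).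
have D8 : 1 / 8 <= D by have := powR2N_le_inv16 a4; rewrite -/eps /D; nra.
have B'0 : 0 < B' by rewrite divr_gt0 //; lra.
have B'_le : B' <= 10 * B by rewrite ler_pdivrMr; nra.
set h := fun y => y / B' + 2^-1.
have h_homo : {homo h : x y / x <= y}.
  by move=> x y xy; rewrite /h lerD2r ler_pM2r ?invr_gt0.
have h_in y : y \in s -> (L%:R - 1) * eps <= h y <= 1 - (L%:R - 1) * eps.
  move=> /sB yB; have : `|y / B'| <= D.
    rewrite normrM normfV (gtr0_norm B'0) ler_pdivrMr // /B' mulrCA.
    by rewrite divff ?mulr1 ?gt_eqF //; lra.
  by rewrite ler_norml /h /D => /andP[? ?]; apply/andP; split; lra.
have M_err : `|M_fuel p (size s) (map h s) - h (listmax s)| <= L%:R * eps.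
  rewrite -listmax_map_homo //; apply: (M_fuel_err m_err).
  - by case: (s) ne.
  - by rewrite size_map up_logP.
  - by rewrite size_map.
  - by move=> _ /mapP[y ys ->]; apply: h_in.
have -> : B' * (M_fuel p (size s) (map h s) - 2^-1) - listmax s
          = B' * (M_fuel p (size s) (map h s) - h (listmax s)).
  by rewrite /h; field; apply: lt0r_neq0.
rewrite normrM gtr0_norm // -mulrA.
apply: le_trans (ler_wpM2l (ltW B'0) M_err) _.
by rewrite ler_wpM2r // mulr_ge0 // ler0n.
Qed.

Lemma maxpool_block_Err (p : {poly R}) (alpha B e : R) k0 n m
    (w : 'I_m -> 'I_(k0 ^ 2) -> 'I_n) :
  approx_max01 p (2 `^ (- alpha)) -> 0 < B -> 0 <= e ->
  (0 < k0 <= 10)%N -> 4 <= alpha ->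
  (Err (maxpool_block w) (maxpool_block_al p alpha B w) B e
     <= (10 * B * (up_log 2 (k0 ^ 2))%:R * 2 `^ (- alpha) + e)%:E)%E.
Proof.
move=> m_err B0 e0 /andP[k0_gt0 k0_le] a4.
apply: Err_le_pointwise => [|x d xdB de i].
  by rewrite addr_ge0 // !mulr_ge0 ?ler0n ?(approx_max01_ge0 m_err) // ltW.
have K_gt0 : (0 < k0 ^ 2)%N by rewrite expn_gt0 k0_gt0.
rewrite !mxE; set s := window (w i) (x + d).
have size_s : size s = (k0 ^ 2)%N by rewrite size_map size_enum_ord.
rewrite -[X in up_log _ X]size_s -[Mt_al _ _ _ _](subrK (listmax s)) -addrA.
apply: le_trans (ler_normD _ _) _; apply: lerD.
  apply: Mt_al_err => //; first by rewrite -size_eq0 size_s -lt0n.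
    by rewrite size_s expnS expn1; nia.
  by move=> _ /mapP[j _ ->]; apply: vnorm_le_coord xdB.
apply: dist_listmax_le => [|j]; first by rewrite -size_eq0 size_enum_ord -lt0n.
rewrite mxE addrAC subrr add0r.
exact: vnorm_le_coord de.
Qed.

Lemma expR_ratio_le_half (x : R) : 0 <= x -> (expR x - 1) / (expR x + 1) <= x / 2.
Proof.
move=> x0; have E0 := expR_gt0 x.
rewrite ler_pdivrMr ?ltr_wpDl ?expR_ge0 //.
pose f u : R := u * (expR u + 1) - 2 * (expR u - 1).
have df (t : R) : is_derive t (1 : R) f (1 - (1 - t) * expR t).
  by apply: is_derive_eq; rewrite /GRing.scale /= !addr0 subr0; ring.
suff : f 0 <= f x by rewrite /f expR0; lra.
apply: (@ger0_derive1_ndecr _ f 0 x); rewrite ?lexx //.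
- (* (1 - t) e^t <= e^(-t) e^t = 1 *)
  move=> t _; rewrite derive1E derive_val subr_ge0.
  have := ler_wpM2r (expR_ge0 t) (expR_ge1Dx (- t)).
  by rewrite -expRD addNr expR0.
- by apply: derivable_within_continuous => t _; case: (df t).
Qed.

Lemma ler_div_add (x y X Y : R) : 0 < x -> 0 <= Y -> x <= X -> Y <= y ->
  x / (x + y) <= X / (X + Y).
Proof.
move=> x0 Y0 xX Yy; have X0 : 0 < X by lra.
have y0 : 0 <= y by lra.
rewrite ler_pdivrMr ?ltr_wpDr // mulrAC ler_pdivlMr ?ltr_wpDr //; nra.
Qed.

Lemma div_scale_sub_le (a b q : R) : 0 <= a -> 0 <= b -> 0 < a + b -> 1 <= q ->
  a * q / (a * q + b / q) - a / (a + b) <= (q - 1) / (q + 1).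
Proof.
move=> a0 b0 ab0 q1; have q0 : 0 < q by lra.
have aqqb : 0 < a * q * q + b.
  by rewrite -mulrA; apply: lt_le_trans ab0 _; rewrite lerD2r ler_peMr //; nra.
rewrite -subr_ge0.
have -> : (q - 1) / (q + 1) - (a * q / (a * q + b / q) - a / (a + b))
        = (q - 1) * (a * q - b) ^+ 2 / ((q + 1) * (a * q * q + b) * (a + b)).
  by field; apply/and4P; split; apply: lt0r_neq0; lra.
apply: divr_ge0; first by rewrite mulr_ge0 ?sqr_ge0 ?subr_ge0.
by rewrite !mulr_ge0 ?ltW //; lra.
Qed.

Lemma dist_div_add_le (a b a' b' q : R) : 0 < a -> 0 <= b -> 1 <= q ->
  a / q <= a' <= a * q -> b / q <= b' <= b * q ->
  `|a' / (a' + b') - a / (a + b)| <= (q - 1) / (q + 1).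
Proof.
move=> a0 b0 q1 /andP[a'_ge a'_le] /andP[b'_ge b'_le].
have q0 : 0 < q by lra.
have aq0 : 0 < a / q by rewrite divr_gt0.
have bq0 : 0 <= b / q by rewrite divr_ge0 // ltW.
have bq1 : b <= b * q by rewrite ler_peMr.
have up : a' / (a' + b') <= a * q / (a * q + b / q) by apply: ler_div_add; lra.
have lo : a / q / (a / q + b * q) <= a' / (a' + b') by apply: ler_div_add; lra.
have compl (u v : R) : 0 < u + v -> u / (u + v) = 1 - v / (v + u).
  by move=> uv; rewrite [v + u]addrC; field; apply: lt0r_neq0.
have := div_scale_sub_le (ltW a0) b0 (_ : 0 < a + b) q1.
(* the lower deviation is the upper one for the complementary share b / (a + b) *)
have := div_scale_sub_le b0 (ltW a0) (_ : 0 < b + a) q1.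
rewrite (compl (b * q)) ?(compl b); try lra.
by rewrite ler_norml; lra.
Qed.

Lemma softmax_block_Err N (B e : R) : 0 <= e ->
  (Err (@softmax_block R N) (@softmax_block R N) B e <= (e / 2)%:E)%E.
Proof.
move=> e0; apply: Err_le_pointwise => [|x d _ de i]; first exact: divr_ge0.
have expR_shift j : expR (x j ord0) / expR e <= expR (x j ord0 + d j ord0)
                    <= expR (x j ord0) * expR e.
  rewrite expRD -expRN !ler_pM2l ?expR_gt0 // !ler_expR -ler_norml.
  exact: vnorm_le_coord de.
rewrite !mxE; under eq_bigr do rewrite mxE.
rewrite (bigD1 i) //= [X in _ - _ / X](bigD1 i) //=.
apply: le_trans (expR_ratio_le_half e0); apply: dist_div_add_le.
- exact: expR_gt0.
- by rewrite sumr_ge0 // => j _; apply: expR_ge0.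
- by rewrite -expR0 ler_expR.
- exact: expR_shift.
- rewrite !mulr_suml; apply/andP.
  by split; apply: ler_sum => j _; case/andP: (expR_shift j).
Qed.

End BlockErrors.

Theorem lemma1 (R : realType) (B alpha : R) (p : {poly R}) :
  1 < B -> 0 < alpha ->
  (forall a b : R, 0 <= a <= 1 -> 0 <= b <= 1 ->
     `|m_al p a b - Num.max a b| <= 2 `^ (- alpha)) ->
  forall e : R, 0 <= e ->
  [/\ (* (a) linear block *)
      (forall (m n : nat) (A : 'M[R]_(m, n)) (b : 'cV[R]_m),
         (Err (linear_block A b) (linear_block A b) B e
            <= (mnorm A * e)%:E)%E),
      (* (b) ReLU block *)
      (forall n : nat,
         (Err (@relu_block R n) (relu_block_al p B (n:=n)) B e
            <= (B * 2 `^ (- alpha) + e)%:E)%E),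
      (* (c) max-pooling block, kernel size k0 <= 10, windows of k0^2 inputs *)
      (forall (k0 n m : nat) (w : 'I_m -> 'I_(k0 ^ 2) -> 'I_n),
         (0 < k0 <= 10)%N -> 4 <= alpha ->
         (Err (maxpool_block w) (maxpool_block_al p alpha B w) B e
            <= (10 * B * (up_log 2 (k0 ^ 2))%:R * 2 `^ (- alpha) + e)%:E)%E)
    & (* (d) softmax block *)
      (forall N : nat,
         (Err (@softmax_block R N) (@softmax_block R N) B e <= (e / 2)%:E)%E)].
Proof.
move=> B1 _ m_err e e0; have B0 : 0 < B := lt_trans ltr01 B1.
split.
- by move=> m n A b; apply: linear_block_Err.
- by move=> n; apply: relu_block_Err.
- by move=> k0 n m w; apply: maxpool_block_Err.
- by move=> N; apply: softmax_block_Err.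
Qed.
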